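(* For the iterates of SONATA with step-size $\alpha\in(0,1]$ under Assumptions (A), (B), (C), (W), for every agent $i$ and every $\nu\ge0$: $$U(x_i^{\nu+1/2})\le U(x_i^\nu)-\alpha\Big(\big(1-\tfrac\alpha2\big)\tilde\mu_i+\tfrac\alpha2D_i^\ell\Big)\|d_i^\nu\|^2+\alpha\|d_i^\nu\|\,\|\delta_i^\nu\|.$$
   Context: Problem (P): minimize $U=F+G$ over $\mathcal K$, $F=\frac1m\sum_{i=1}^mf_i$. (A): $\mathcal K\subseteq\mathbb R^d$ nonempty closed convex; $f_i$ twice differentiable convex on open $\mathcal O\supseteq\mathcal K$; $\mu I\preceq\nabla^2F\preceq LI$ on $\mathcal K$ ($\mu>0$, $L<\infty$); $G$ convex on $\mathcal K$. (B): connected undirected graph on $\{1,\dots,m\}$, edges $\mathcal E$. (W): $w_{ii}>0$; for $i\ne j$, $w_{ij}>0$ iff $(i,j)\in\mathcal E$, else 0; $W$ doubly stochastic. (C): $\tilde f_i:\mathcal O\times\mathcal O\to\mathbb R$ $C^2$, $\nabla\tilde f_i(x;x)=\nabla f_i(x)$, $\nabla\tilde f_i(\cdot;x)$ $\tilde L_i$-Lipschitz, $\tilde f_i(\cdot;x)$ $\tilde\mu_i$-strongly convex on $\mathcal K$ for all $x\in\mathcal K$ (first-argument derivatives); constants $D_i^\ell\le D_i^u$ with $D_i^\ell I\preceq\nabla^2\tilde f_i(x;y)-\nabla^2F(x)\preceq D_i^uI$ on $\mathcal K\times\mathcal K$. SONATA: $x_i^0\in\mathcal K$, $y_i^0=\nabla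 f_i(x_i^0)$; $\hat x_i^\nu=\arg\min_{x_i\in\mathcal K}\tilde f_i(x_i;x_i^\nu)+(y_i^\nu-\nabla f_i(x_i^\nu))^\top(x_i-x_i^\nu)+G(x_i)$; $d_i^\nu=\hat x_i^\nu-x_i^\nu$; $x_i^{\nu+1/2}=x_i^\nu+\alpha d_i^\nu$; $x_i^{\nu+1}=\sum_jw_{ij}x_j^{\nu+1/2}$; $y_i^{\nu+1}=\sum_jw_{ij}(y_j^\nu+\nabla f_j(x_j^{\nu+1})-\nabla f_j(x_j^\nu))$. Tracking error $\delta_i^\nu=\nabla F(x_i^\nu)-y_i^\nu$. *)

From HB Require Import structures.
From mathcomp Require Import all_boot all_order all_algebra.
From mathcomp Require Import all_classical all_reals all_analysis.
Set Implicit Arguments. Unset Strict Implicit. Unset Printing Implicit Defensive.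
Import Order.TTheory GRing.Theory Num.Theory.
Import numFieldNormedType.Exports.
Local Open Scope classical_set_scope.
Local Open Scope ring_scope.

Section SonataDefs.
Variable R : realType.
Variable d : nat.
Local Notation vec := 'rV[R]_d.

Definition dotp (u v : vec) : R := (u *m v^T) 0 0.
Definition enorm (u : vec) : R := Num.sqrt (dotp u u).

Definition ebasis (j : 'I_d) : vec := delta_mx 0 j.

Definition partial (f : vec -> R) (j : 'I_d) : vec -> R :=
  fun x => derive f x (ebasis j).
Definition grad (f : vec -> R) (x : vec) : vec := \row_j partial f j x.
Definition hess (f : vec -> R) (x : vec) : 'M[R]_d :=
  \matrix_(j, k) partial (partial f k) j x.

Definition quadf (M : 'M[R]_d) (v : vec) : R := (v *m M *m v^T) 0 0.
Definition loewner_le (A B : 'M[R]_d) : Prop := forall v : vec, 0 <= quadf (B - A) v.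

Definition twice_diff_on (S : set vec) (f : vec -> R) : Prop :=
  forall x, S x -> differentiable f x /\ forall j, differentiable (partial f j) x.

Definition cvx_set (S : set vec) : Prop :=
  forall x y (t : R), S x -> S y -> 0 <= t <= 1 -> S (t *: x + (1 - t) *: y).

Definition convex_fun_on (S : set vec) (f : vec -> R) : Prop :=
  forall x y (t : R), S x -> S y -> 0 <= t <= 1 -> S (t *: x + (1 - t) *: y) ->
    f (t *: x + (1 - t) *: y) <= t * f x + (1 - t) * f y.

Definition strongly_convex_on (S : set vec) (mu : R) (f : vec -> R) : Prop :=
  forall x y (t : R), S x -> S y -> 0 <= t <= 1 ->
    f (t *: x + (1 - t) *: y) <=
      t * f x + (1 - t) * f y - mu / 2 * t * (1 - t) * (enorm (x - y)) ^+ 2.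

Definition lipschitz_grad_on (S : set vec) (L : R) (f : vec -> R) : Prop :=
  forall x y, S x -> S y -> enorm (grad f x - grad f y) <= L * enorm (x - y).

Definition C2_on (P : set (vec * vec)) (g : vec * vec -> R) : Prop :=
  (forall p, P p -> differentiable g p /\
      forall v : vec * vec, differentiable (fun q => derive g q v) p) /\
  (forall v w : vec * vec,
      {in P, continuous (fun q => derive (fun r => derive g r v) q w)}).

End SonataDefs.

From HB Require Import structures.
From mathcomp Require Import all_boot all_order all_algebra.
From mathcomp Require Import all_classical all_reals all_analysis.
From mathcomp Require Import ring lra.
Import Order.TTheory GRing.Theory Num.Theory.
Import numFieldNormedType.Exports.
Local Open Scope classical_set_scope.
Local Open Scope ring_scope.

(* The surrogate objective h + <y - grad f_i(x), . - x> + G, with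
   h = f~_i(.; x), is strongly convex with modulus mu~_i, so its minimizer x^
   beats x by mu~_i/2 |d|^2. Along the step x + alpha d, strong convexity of h
   and convexity of G interpolate this gain, and since the Hessian of h - F is at
   least D^l, a second-order Taylor bound of h - F on the segment transfers it
   from h to F. Because grad h(x) = grad f_i(x), the first-order mismatch left
   over is exactly alpha <grad F(x) - y, d> = alpha <delta, d>, which
   Cauchy-Schwarz bounds. The iterates stay in K as convex combinations. *)

Section InnerProduct.
Context {R : realType} {n : nat}.
Implicit Types (u v w : 'rV[R]_n) (k : R).

Lemma dotpE u v : dotp u v = \sum_j u 0 j * v 0 j.
Proof. by rewrite /dotp mxE; apply: eq_bigr => j _; rewrite mxE. Qed.

Lemma dotpC u v : dotp u v = dotp v u.
Proof. by rewrite !dotpE; apply: eq_bigr => j _; rewrite mulrC. Qed.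

Lemma dotpDl u v w : dotp (u + v) w = dotp u w + dotp v w.
Proof. by rewrite !dotpE -big_split; apply: eq_bigr => j _; rewrite mxE mulrDl. Qed.

Lemma dotpZl k u w : dotp (k *: u) w = k * dotp u w.
Proof. by rewrite !dotpE mulr_sumr; apply: eq_bigr => j _; rewrite mxE mulrA. Qed.

Lemma dotpBl u v w : dotp (u - v) w = dotp u w - dotp v w.
Proof. by rewrite dotpDl -scaleN1r dotpZl mulN1r. Qed.

Lemma dotpDr u v w : dotp w (u + v) = dotp w u + dotp w v.
Proof. by rewrite dotpC dotpDl !(dotpC w). Qed.

Lemma dotpZr k u w : dotp w (k *: u) = k * dotp w u.
Proof. by rewrite dotpC dotpZl dotpC. Qed.

Lemma dotpBr u v w : dotp w (u - v) = dotp w u - dotp w v.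
Proof. by rewrite dotpC dotpBl !(dotpC w). Qed.

Lemma dotp0l u : dotp 0 u = 0.
Proof. by rewrite -(scale0r 0) dotpZl mul0r. Qed.

Lemma dotp0r u : dotp u 0 = 0.
Proof. by rewrite dotpC dotp0l. Qed.

Lemma dotpp_ge0 u : 0 <= dotp u u.
Proof. by rewrite dotpE; apply: sumr_ge0 => j _; rewrite -expr2 sqr_ge0. Qed.

Lemma dotpp_eq0 u : (dotp u u == 0) = (u == 0).
Proof.
apply/idP/eqP => [|->]; last by rewrite dotp0l.
rewrite dotpE psumr_eq0 => [/allP u0|j _]; last by rewrite -expr2 sqr_ge0.
apply/rowP => j; rewrite mxE.
by apply/eqP; rewrite -sqrf_eq0 expr2; exact: u0 (mem_index_enum j).
Qed.

Lemma enorm_ge0 u : 0 <= enorm u.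
Proof. exact: sqrtr_ge0. Qed.

Lemma enorm_sqr u : enorm u ^+ 2 = dotp u u.
Proof. by rewrite /enorm sqr_sqrtr // dotpp_ge0. Qed.

Lemma enorm_eq0 u : (enorm u == 0) = (u == 0).
Proof. by rewrite -sqrf_eq0 enorm_sqr dotpp_eq0. Qed.

Lemma cauchy_schwarz u v : dotp u v <= enorm u * enorm v.
Proof.
have [->|u0] := eqVneq u 0; first by rewrite dotp0l mulr_ge0 ?enorm_ge0.
have [->|v0] := eqVneq v 0; first by rewrite dotpC dotp0l mulr_ge0 ?enorm_ge0.
set a := enorm u; set b := enorm v.
have a_gt0 : 0 < a by rewrite lt_def enorm_eq0 u0 enorm_ge0.
have b_gt0 : 0 < b by rewrite lt_def enorm_eq0 v0 enorm_ge0.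
have ab_gt0 : 0 < a * b by rewrite mulr_gt0.
(* expand [0 <= |b u - a v|^2] *)
have := dotpp_ge0 (b *: u - a *: v).
rewrite dotpBl !dotpBr !dotpZl !dotpZr -!enorm_sqr (dotpC v u) -/a -/b.
nra.
Qed.

End InnerProduct.

Lemma ler_of_vanishing_slack {R : realFieldType} (a b c : R) :
  (forall t, 0 < t <= 1 -> a <= b + t * c) -> a <= b.
Proof.
move=> abc; apply/ler_addgt0Pr => e e_gt0.
have ce_gt0 : 0 < `|c| + e by rewrite ltr_wpDl.
set t := e / (`|c| + e).
have t_gt0 : 0 < t by rewrite divr_gt0.
have t_le1 : t <= 1 by rewrite ler_pdivrMr // mul1r lerDr.
have tce : t * (`|c| + e) = e by rewrite mulfVK // gt_eqF.
have := abc t; rewrite t_gt0 t_le1 => /(_ isT) /le_trans; apply.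
rewrite lerD2l; apply: le_trans (ler_wpM2l (ltW t_gt0) (ler_norm c)) _.
by rewrite -[leRHS]tce ler_wpM2l ?lerDl // ltW.
Qed.

Section Convexity.
Context {R : realType} {n : nat}.
Local Notation vec := 'rV[R]_n.
Context {K : set vec}.
Hypothesis K_cvx : cvx_set K.

Lemma cvx_set_segment x y t : K x -> K y -> 0 <= t <= 1 -> K (x + t *: (y - x)).
Proof.
move=> Kx Ky t01; have -> : x + t *: (y - x) = t *: y + (1 - t) *: x.
  by rewrite scalerBr scalerBl scale1r addrCA addrC.
exact: K_cvx.
Qed.

Lemma cvx_set_sum k (w : 'I_k -> R) (p : 'I_k -> vec) :
  (forall j, 0 <= w j) -> \sum_j w j = 1 -> (forall j, K (p j)) ->
  K (\sum_j w j *: p j).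
Proof.
elim: k w p => [|k IHk] w p w_ge0 w1 Kp.
  by move: w1; rewrite big_ord0 => /eqP; rewrite eq_sym oner_eq0.
rewrite big_ord_recr /=; rewrite big_ord_recr /= in w1.
set s := \sum_(j < k) w (widen_ord (leqnSn k) j) in w1.
have s_ge0 : 0 <= s by apply: sumr_ge0.
have wmax : w ord_max = 1 - s by rewrite -w1 addrAC subrr add0r.
have [s0|s_neq0] := eqVneq s 0.
  rewrite big1 ?add0r ?wmax ?s0 ?subr0 ?scale1r // => j _.
  move/eqP: s0; rewrite psumr_eq0 // => /allP /(_ j (mem_index_enum j)) /eqP ->.
  exact: scale0r.
have s_gt0 : 0 < s by rewrite lt_def s_neq0.
(* renormalize the first k weights by their total mass s *)
have -> : \sum_(j < k) w (widen_ord (leqnSn k) j) *: p (widen_ord (leqnSn k) j)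
   = s *: \sum_(j < k) (w (widen_ord (leqnSn k) j) / s) *: p (widen_ord (leqnSn k) j).
  rewrite scaler_sumr; apply: eq_bigr => j _.
  by rewrite scalerA mulrCA mulfV // mulr1.
rewrite wmax; apply: K_cvx => //; last by rewrite s_ge0 -w1 lerDl w_ge0.
apply: IHk => // [j|]; first exact: divr_ge0.
by rewrite -mulr_suml mulfV.
Qed.

Lemma strongly_convex_onD_convex {mu} {h g : vec -> R} :
  strongly_convex_on K mu h -> convex_fun_on K g -> strongly_convex_on K mu (h \+ g).
Proof.
move=> h_sc g_cvx x y t Kx Ky t01 /=.
have := h_sc x y t Kx Ky t01; have := g_cvx x y t Kx Ky t01 (K_cvx _ _ _ Kx Ky t01).
lra.
Qed.

Lemma strongly_convex_onDl_affine {mu} {h : vec -> R} (r c : vec) :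
  strongly_convex_on K mu h -> strongly_convex_on K mu (fun z => dotp r (z - c) + h z).
Proof.
move=> h_sc x y t Kx Ky t01 /=.
have -> : t *: x + (1 - t) *: y - c = t *: (x - c) + (1 - t) *: (y - c).
  by apply/rowP => j; rewrite !mxE; ring.
have := h_sc x y t Kx Ky t01; rewrite (dotpDr (t *: _)) !dotpZr; lra.
Qed.

(* Compare [xm] with the points [(1 - t) xm + t x] and let [t] tend to [0]. *)
Lemma strongly_convex_min_gap {mu} {phi : vec -> R} {x xm} :
  strongly_convex_on K mu phi -> K x -> K xm -> (forall z, K z -> phi xm <= phi z) ->
  phi xm + mu / 2 * enorm (xm - x) ^+ 2 <= phi x.
Proof.
move=> phi_sc Kx Kxm xm_min; set C := mu / 2 * _.
apply: (@ler_of_vanishing_slack _ _ _ C) => t /andP[t_gt0 t_le1].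
have s01 : 0 <= 1 - t <= 1 by rewrite subr_ge0 t_le1 gerBl ltW.
have := phi_sc xm x (1 - t) Kxm Kx s01.
have := xm_min _ (K_cvx _ _ _ Kxm Kx s01).
rewrite /C; nra.
Qed.

End Convexity.

Section SecondOrderBound.
Context {R : realType}.

Lemma is_derive_ge0_le (h h' : R -> R) (a b : R) : a <= b ->
  (forall t : R, a <= t <= b -> is_derive t 1 h (h' t)) ->
  (forall t, a <= t <= b -> 0 <= h' t) -> h a <= h b.
Proof.
move=> ab dh h'_ge0.
have cc (t : R) : t \in `[a, b] -> a <= t <= b by rewrite in_itv.
have oo (t : R) : t \in `]a, b[ -> a <= t <= b by rewrite in_itv => /andP[? ?]; rewrite !ltW.
apply: (ger0_derive1_ndecr (a := a) (b := b)) => //.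
- by move=> t /oo /dh [].
- by move=> t /oo tab; rewrite derive1E; case: (dh t tab) => _ ->; exact: h'_ge0.
- by apply: derivable_within_continuous => t /cc /dh [].
Qed.

Lemma taylor2_lower (g g1 g2 : R -> R) (c a : R) : 0 <= a ->
  (forall t : R, 0 <= t <= a -> is_derive t 1 g (g1 t)) ->
  (forall t, 0 <= t <= a -> is_derive t 1 g1 (g2 t)) ->
  (forall t, 0 <= t <= a -> c <= g2 t) ->
  g 0 + a * g1 0 + c * a ^+ 2 / 2 <= g a.
Proof.
move=> a_ge0 dg dg1 g2_ge.
have g1_ge (t : R) : 0 <= t <= a -> g1 0 + c * t <= g1 t.
  case/andP=> t_ge0 t_le; have sub s : 0 <= s <= t -> 0 <= s <= a.
    by case/andP=> s0 st; rewrite s0 (le_trans st t_le).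
  have dpsi s : 0 <= s <= a -> is_derive s 1 (g1 - c \*: id) (g2 s - c *: 1).
    by move=> /dg1 dg1s; apply: is_deriveB; apply: is_deriveZ; exact: is_derive_id.
  have : g1 0 - c * 0 <= g1 t - c * t.
    apply: (@is_derive_ge0_le (g1 - c \*: id) (fun s => g2 s - c *: 1)) => //.
      by move=> s /sub /dpsi.
    by move=> s /sub s0a; rewrite subr_ge0 [c *: 1]mulr1 g2_ge.
  lra.
(* [g - g1 0 * t - c * t ^+ 2 / 2] has derivative [g1 t - g1 0 - c * t >= 0] *)
have dchi s : 0 <= s <= a -> is_derive s 1 (g - g1 0 \*: id - (c / 2) \*: (id * id))
    (g1 s - g1 0 *: 1 - (c / 2) *: (s *: 1 + s *: 1)).
  by move=> /dg dgs; apply: is_deriveB.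
have scaleE (u w : R) : u *: w = u * w by [].
have : g 0 - g1 0 * 0 - c / 2 * (0 * 0) <= g a - g1 0 * a - c / 2 * (a * a).
  apply: (@is_derive_ge0_le (g - g1 0 \*: id - (c / 2) \*: (id * id))) => // s s0a.
  by have := g1_ge s s0a; rewrite !scaleE; lra.
lra.
Qed.

End SecondOrderBound.

Section DerivativeAlongLine.
Context {R : realType} {V : normedModType R}.

Let line_quotient (phi : V -> R) (a v : V) (t : R) :
  (fun h : R => h^-1 *: (((fun s : R => phi (a + s *: v)) \o shift t) (h *: 1)
                         - phi (a + t *: v)))
  = (fun h => h^-1 *: ((phi \o shift (a + t *: v)) (h *: v) - phi (a + t *: v))).
Proof.
apply/funext => h /=; congr (_ *: (phi _ - _)).
by rewrite /shift /= scalerDl [h *: 1]mulr1 addrCA addrC.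
Qed.

Lemma is_derive_line (phi : V -> R) (a v : V) (t l : R) :
  is_derive (a + t *: v) v phi l -> is_derive t 1 (fun s => phi (a + s *: v)) l.
Proof.
case=> dphi <-; apply: DeriveDef; last by rewrite /derive line_quotient.
by rewrite /derivable line_quotient.
Qed.

Lemma taylor2_lower_line (phi q : V -> R) (x v : V) (c a : R) : 0 <= a ->
  (forall t, 0 <= t <= a -> derivable phi (x + t *: v) v) ->
  (forall t, 0 <= t <= a -> is_derive (x + t *: v) v ('D_v phi) (q (x + t *: v))) ->
  (forall t, 0 <= t <= a -> c <= q (x + t *: v)) ->
  phi x + a * 'D_v phi x + c * a ^+ 2 / 2 <= phi (x + a *: v).
Proof.
move=> a_ge0 dphi d2phi q_ge.
have := @taylor2_lower R (fun s => phi (x + s *: v)) (fun s => 'D_v phi (x + s *: v))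
  (fun s => q (x + s *: v)) c a a_ge0.
rewrite scale0r addr0; apply=> t ta; last exact: q_ge.
  by apply: is_derive_line; apply: DeriveDef (dphi t ta) _.
exact: is_derive_line (d2phi t ta).
Qed.

End DerivativeAlongLine.

Lemma near_eq_differentiable {R : realType} {V W : normedModType R} (f g : V -> W) x :
  (\near x, f x = g x) -> differentiable f x -> differentiable g x.
Proof.
move=> fg df; have fgx : f x = g x := nbhs_singleton fg.
have fg0 : \forall h \near 0, f (h + x) = g (h + x).
  by move: fg; rewrite (near_shift 0) subr0.
have dgE : g \o shift x = cst (g x) + 'd f x +o_ 0 id.
  apply/eqaddoP => e e0; have /eqaddoP /(_ e e0) := diff_locally df.
  by apply: filterS2 fg0 => h fgh; rewrite !fctE /= fgh fgx.
have dfc := diff_continuous df.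
by apply/(@diff_locallyP R V W x g); rewrite (diff_unique dfc dgE).
Qed.

Section Hessian.
Context {R : realType} {n : nat}.
Local Notation vec := 'rV[R]_n.
Implicit Types (phi psi : vec -> R) (z v : vec).

Lemma derive_partialE phi z v : differentiable phi z ->
  'D_v phi z = \sum_k v 0 k * partial phi k z.
Proof.
move=> dphi; rewrite deriveE // {1}(row_sum_delta v) linear_sum.
by apply: eq_bigr => k _; rewrite linearZ /= -deriveE.
Qed.

Lemma derive_grad phi z v : differentiable phi z -> 'D_v phi z = dotp (grad phi z) v.
Proof.
move=> dphi; rewrite derive_partialE // dotpE.
by apply: eq_bigr => k _; rewrite mxE mulrC.
Qed.

Lemma quadfE (M : 'M[R]_n) v : quadf M v = \sum_k v 0 k * \sum_j v 0 j * M j k.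
Proof. by rewrite /quadf mxE; apply: eq_bigr => k _; rewrite !mxE mulrC. Qed.

Lemma quadfB (A B : 'M[R]_n) v : quadf (A - B) v = quadf A v - quadf B v.
Proof. by rewrite /quadf mulmxBr mulmxBl !mxE. Qed.

Lemma quadf_scalar (c : R) v : quadf c%:M v = c * dotp v v.
Proof. by rewrite /quadf mul_mx_scalar -scalemxAl mxE. Qed.

Context {O : set vec}.
Hypothesis O_open : open O.

Let near_in {z} : O z -> \forall u \near z, O u.
Proof. by move=> Oz; exact: open_nbhs_nbhs. Qed.

Lemma is_derive_hess phi z v : O z -> twice_diff_on O phi ->
  is_derive z v ('D_v phi) (quadf (hess phi z) v).
Proof.
move=> Oz phi2; have [_ dpartial] := phi2 z Oz.
apply: (@near_eq_is_derive _ _ _ (\sum_k v 0 k \*: partial phi k)).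
  move: (near_in Oz); apply: filterS => u Ou.
  rewrite fct_sumE derive_partialE; first exact: eq_bigr.
  by case: (phi2 u Ou).
have d2 k : derivable (v 0 k \*: partial phi k) z v.
  by apply: derivableZ; exact: diff_derivable.
apply: DeriveDef; first exact: derivable_sum.
rewrite derive_sum // quadfE; apply: eq_bigr => k _.
rewrite deriveZ; last exact: diff_derivable.
rewrite derive_partialE //; congr (_ * _).
by apply: eq_bigr => j _; rewrite mxE.
Qed.

Lemma is_derive_hessB phi psi z v : O z -> twice_diff_on O phi -> twice_diff_on O psi ->
  is_derive z v ('D_v (phi - psi)) (quadf (hess phi z - hess psi z) v).
Proof.
move=> Oz phi2 psi2; rewrite quadfB.
apply: (@near_eq_is_derive _ _ _ ('D_v phi - 'D_v psi)); last first.
  by apply: is_deriveB; exact: is_derive_hess.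
move: (near_in Oz); apply: filterS => u Ou.
by rewrite deriveB //; apply: diff_derivable; [case: (phi2 u Ou) | case: (psi2 u Ou)].
Qed.

Lemma twice_diff_on_scaled_sum m (c : R) (f : 'I_m -> vec -> R) :
  (forall i, twice_diff_on O (f i)) -> twice_diff_on O (fun u => c * \sum_i f i u).
Proof.
move=> f2; have -> : (fun u => c * \sum_i f i u) = c \*: \sum_i f i.
  by apply/funext => u; rewrite /= fct_sumE.
move=> z Oz; split; first by apply/differentiableZ/differentiable_sum => i; case: (f2 i z Oz).
move=> k; apply: (@near_eq_differentiable _ _ _ (c \*: \sum_i partial (f i) k)).
  move: (near_in Oz); apply: filterS => u Ou.
  have df i : derivable (f i) u (ebasis R k) by apply: diff_derivable; case: (f2 i u Ou).
  rewrite /partial deriveZ; last exact: derivable_sum.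
  by rewrite derive_sum // /= fct_sumE.
by apply/differentiableZ/differentiable_sum => i; case: (f2 i z Oz) => _.
Qed.

End Hessian.

Section Slice.
Context {R : realType} {n : nat}.
Local Notation vec := 'rV[R]_n.

Lemma derive_slice (g : vec * vec -> R) w u e :
  'D_e (fun v => g (v, w)) u = 'D_(e, 0) g (u, w).
Proof.
rewrite /derive.
suff -> : (fun h : R => h^-1 *: (((fun v => g (v, w)) \o shift u) (h *: e) - g (u, w)))
  = (fun h : R => h^-1 *: ((g \o shift (u, w)) (h *: (e, 0)) - g (u, w))) by [].
apply/funext => h /=; rewrite /shift /=.
have -> : h *: ((e, 0) : vec * vec) + (u, w) = (h *: e + u, h *: 0 + w) by [].
by rewrite scaler0 add0r.
Qed.

Lemma differentiable_slice (g : vec * vec -> R) w u :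
  differentiable g (u, w) -> differentiable (fun v => g (v, w)) u.
Proof. by move=> dg; exact: (@differentiable_comp _ _ _ _ (fun v => (v, w)) g). Qed.

Lemma twice_diff_on_slice {O : set vec} {g : vec * vec -> R} {w} :
  C2_on (O `*` O) g -> O w -> twice_diff_on O (fun v => g (v, w)).
Proof.
move=> [g1 _] Ow u Ou; have [dg ddg] := g1 (u, w) (conj Ou Ow).
split=> [|j]; first exact: differentiable_slice.
have -> : partial (fun v => g (v, w)) j = (fun v => 'D_(ebasis R j, 0) g (v, w)).
  by apply/funext => v; rewrite /partial derive_slice.
exact: (@differentiable_slice (fun q => 'D_(ebasis R j, 0) g q)).
Qed.

End Slice.

Section OneStepDescent.
Context {R : realType} {n : nat}.
Local Notation vec := 'rV[R]_n.
Context {K O : set vec} {F G h : vec -> R} {mu Dl alpha : R} {r x0 xh : vec}.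
Hypotheses (K_cvx : cvx_set K) (O_open : open O) (KO : K `<=` O).
Hypotheses (G_cvx : convex_fun_on K G) (h_sc : strongly_convex_on K mu h).
Hypotheses (h2 : twice_diff_on O h) (F2 : twice_diff_on O F).
Hypothesis hess_gap : forall z, K z -> loewner_le Dl%:M (hess h z - hess F z).
Hypotheses (Kx0 : K x0) (Kxh : K xh).
Hypothesis xh_min : forall z, K z ->
  h xh + dotp r (xh - x0) + G xh <= h z + dotp r (z - x0) + G z.
Hypothesis alpha01 : 0 <= alpha <= 1.
Local Notation dd := (xh - x0).

Lemma surrogate_descent : h xh + dotp r dd + G xh + mu / 2 * enorm dd ^+ 2 <= h x0 + G x0.
Proof.
have phi_sc := strongly_convex_onDl_affine r x0 (strongly_convex_onD_convex K_cvx h_sc G_cvx).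
have phi_min z : K z -> dotp r dd + (h xh + G xh) <= dotp r (z - x0) + (h z + G z).
  by move/xh_min; lra.
have := strongly_convex_min_gap K_cvx phi_sc Kx0 Kxh phi_min.
by rewrite /= subrr dotp0r; lra.
Qed.

Lemma second_order_gap :
  h x0 - F x0 + alpha * (dotp (grad h x0) dd - dotp (grad F x0) dd)
    + Dl * enorm dd ^+ 2 * alpha ^+ 2 / 2
  <= h (x0 + alpha *: dd) - F (x0 + alpha *: dd).
Proof.
have [a_ge0 a_le1] := andP alpha01.
have Kseg t : 0 <= t <= alpha -> K (x0 + t *: dd).
  case/andP=> t_ge0 t_le; apply: cvx_set_segment => //.
  by rewrite t_ge0 (le_trans t_le a_le1).
have [dh0 _] := h2 _ (KO _ Kx0); have [dF0 _] := F2 _ (KO _ Kx0).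
have := @taylor2_lower_line R _ (h - F) (fun z => quadf (hess h z - hess F z) dd) x0 dd
  (Dl * enorm dd ^+ 2) alpha a_ge0.
rewrite (deriveB (diff_derivable dh0) (diff_derivable dF0)) !derive_grad //.
apply=> t /Kseg Kt.
- have [dh _] := h2 _ (KO _ Kt); have [dF _] := F2 _ (KO _ Kt).
  exact: derivableB (diff_derivable dh) (diff_derivable dF).
- by apply: (is_derive_hessB O_open) => //; exact: KO.
- by have := hess_gap _ Kt dd; rewrite quadfB quadf_scalar -enorm_sqr subr_ge0.
Qed.

Lemma one_step_descent :
  F (x0 + alpha *: dd) + G (x0 + alpha *: dd)
  <= F x0 + G x0 - alpha * ((1 - alpha / 2) * mu + alpha / 2 * Dl) * enorm dd ^+ 2
     + alpha * dotp (grad F x0 - grad h x0 - r) dd.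
Proof.
have x_step : x0 + alpha *: dd = alpha *: xh + (1 - alpha) *: x0.
  by apply/rowP => j; rewrite !mxE; ring.
have h_step := h_sc xh x0 alpha Kxh Kx0 alpha01.
have G_step := G_cvx xh x0 alpha Kxh Kx0 alpha01 (K_cvx _ _ _ Kxh Kx0 alpha01).
rewrite -x_step in h_step G_step.
have := ler_wpM2l (proj1 (andP alpha01)) surrogate_descent.
have := second_order_gap.
rewrite !dotpBl; lra.
Qed.

End OneStepDescent.

Lemma sonata_iterates_in {R : realType} {n m : nat} {K : set 'rV[R]_n} {W : 'M[R]_m}
    {alpha : R} {x xhat : nat -> 'I_m -> 'rV[R]_n} :
  cvx_set K -> (forall i j, 0 <= W i j) -> (forall i, \sum_j W i j = 1) ->
  0 <= alpha <= 1 -> (forall i, K (x 0%N i)) -> (forall nu i, K (xhat nu i)) ->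
  (forall nu i, x nu.+1 i = \sum_j W i j *: (x nu j + alpha *: (xhat nu j - x nu j))) ->
  forall nu i, K (x nu i).
Proof.
move=> K_cvx W_ge0 W_row alpha01 Kx0 Kxhat x_next; elim=> [|nu IHnu] i //.
by rewrite x_next; apply: (cvx_set_sum K_cvx) => // j; exact: cvx_set_segment.
Qed.

Theorem lemma3p1
  (R : realType) (d m : nat)
  (* (A): feasible set K, open domain O, local costs f_i, regularizer G *)
  (K O : set 'rV[R]_d) (f : 'I_m -> 'rV[R]_d -> R) (G : 'rV[R]_d -> R)
  (mu L : R)
  (* (B): graph; (W): weight matrix *)
  (E : rel 'I_m) (W : 'M[R]_m)
  (* (C): surrogates ft i z x = f~_i(z; x) and constants *)
  (ft : 'I_m -> 'rV[R]_d -> 'rV[R]_d -> R)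
  (Lt mut Dl Du : 'I_m -> R)
  (* SONATA: step size, iterates *)
  (alpha : R)
  (x xhat y : nat -> 'I_m -> 'rV[R]_d) :
  let F := fun z => (m%:R)^-1 * \sum_(i < m) f i z in
  let U := fun z => F z + G z in
  (* (A) *)
  K !=set0 -> closed K -> cvx_set K ->
  open O -> K `<=` O ->
  (forall i, twice_diff_on O (f i) /\ convex_fun_on O (f i)) ->
  0 < mu -> 
  (forall z, K z -> loewner_le (mu%:M) (hess F z) /\ loewner_le (hess F z) (L%:M)) ->
  convex_fun_on K G ->
  (* (B) *)
  (forall i j, E i j = E j i) -> (forall i j, connect E i j) ->
  (* (W) *)
  (forall i, 0 < W i i) ->
  (forall i j, i != j -> (0 < W i j <-> E i j) /\ (~~ E i j -> W i j = 0)) ->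
  (forall i, \sum_(j < m) W i j = 1) -> (forall j, \sum_(i < m) W i j = 1) ->
  (* (C) *)
  (forall i, C2_on (O `*` O) (fun p => ft i p.1 p.2)) ->
  (forall i z, K z -> grad (fun w => ft i w z) z = grad (f i) z) ->
  (forall i z, K z -> lipschitz_grad_on K (Lt i) (fun w => ft i w z)) ->
  (forall i, 0 < mut i) ->
  (forall i z, K z -> strongly_convex_on K (mut i) (fun w => ft i w z)) ->
  (forall i, Dl i <= Du i) ->
  (forall i z w, K z -> K w ->
     loewner_le ((Dl i)%:M) (hess (fun v => ft i v w) z - hess F z) /\
     loewner_le (hess (fun v => ft i v w) z - hess F z) ((Du i)%:M)) ->
  (* SONATA *)
  0 < alpha <= 1 ->
  (forall i, K (x 0%N i)) ->
  (forall i, y 0%N i = grad (f i) (x 0%N i)) ->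
  (forall nu i, K (xhat nu i) /\
     forall z, K z ->
       ft i (xhat nu i) (x nu i)
         + dotp (y nu i - grad (f i) (x nu i)) (xhat nu i - x nu i) + G (xhat nu i)
       <= ft i z (x nu i) + dotp (y nu i - grad (f i) (x nu i)) (z - x nu i) + G z) ->
  (forall nu i, x nu.+1 i =
     \sum_(j < m) W i j *: (x nu j + alpha *: (xhat nu j - x nu j))) ->
  (forall nu i, y nu.+1 i =
     \sum_(j < m) W i j *: (y nu j + grad (f j) (x nu.+1 j) - grad (f j) (x nu j))) ->
  forall (i : 'I_m) (nu : nat),
    let dd := xhat nu i - x nu i in
    let delta := grad F (x nu i) - y nu i in
    U (x nu i + alpha *: dd) <=
      U (x nu i)
      - alpha * ((1 - alpha / 2) * mut i + alpha / 2 * Dl i) * (enorm dd) ^+ 2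
      + alpha * enorm dd * enorm delta.
Proof.
move=> F U _ _ K_cvx O_open KO f2 _ _ G_cvx _ _ W_diag W_offdiag W_row _ ft_C2 ft_grad _ _
  ft_sc _ ft_hess alpha_range Kx0 _ xhat_opt x_next _ i nu; cbv zeta.
have alpha01 : 0 <= alpha <= 1 by case/andP: alpha_range => /ltW -> ->.
have W_ge0 i' j : 0 <= W i' j.
  have [->|ij] := eqVneq i' j; first exact: ltW.
  have [[_ edge_pos] off_edge0] := W_offdiag i' j ij.
  by case: (boolP (E i' j)) => [/edge_pos/ltW | /off_edge0 ->].
have Kx := sonata_iterates_in K_cvx W_ge0 W_row alpha01 Kx0 (fun k j => (xhat_opt k j).1)
  x_next nu i.
have [Kxh xh_min] := xhat_opt nu i.
have F2 : twice_diff_on O F by apply: twice_diff_on_scaled_sum => // j; case: (f2 j).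
have := one_step_descent K_cvx O_open KO G_cvx (ft_sc i _ Kx)
  (twice_diff_on_slice (ft_C2 i) (KO _ Kx)) F2 (fun z Kz => (ft_hess i z _ Kz Kx).1)
  Kx Kxh xh_min alpha01.
rewrite ft_grad // opprB addrA subrK => descent.
apply: le_trans descent _; rewrite lerD2l -mulrA ler_wpM2l ?(proj1 (andP alpha01)) //.
by rewrite mulrC cauchy_schwarz.
Qed.
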